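(* Let $V$ be a vertex algebra and $M$ a subspace of $V$ with $\mathcal{D}(V)\subseteq M$. Then for $u\in V$, $u\in lsr_{0,-1}(M)$ if and only if $u\in rsr_{0,-1}(M)$. In particular $lsr_{0,-1}(M)=rsr_{0,-1}(M)=sr_{0,-1}(M)$.
   Context: A vertex algebra $(V,Y,\mathbf{1})$ is over $\mathbb{C}$; for $u\in V$ write $Y(u,z)=\sum_{n\in\mathbb{Z}}u_nz^{-n-1}$ with $u_n\in\operatorname{End}V$. $\mathcal{D}$ is the linear operator $\mathcal{D}(v)=v_{-2}\mathbf{1}$. Iterated products are nested to the right: $v_{n_1}\cdots v_{n_t}v=v_{n_1}(\cdots(v_{n_t}v))$. For a subspace $M\subseteq V$: $lsr_{0,-1}(M)$ is the set of $v\in V$ such that for every $b\in V$ there is $m\ge0$ with $b_sv_{n_1}\cdots v_{n_t}v\in M$ for all $t\ge m$ and all $s,n_1,\dots,n_t\in\{0,-1\}$. $rsr_{0,-1}(M)$ is the set of $v\in V$ such that for every $w\in V$ there is $m\ge 0$ with $(v_{n_1}\cdots v_{n_t}v)_nw\in M$ for all $t\ge m$ and all $n,n_1,\dots,n_t\in\{0,-1\}$. $sr_{0,-1}(M)=lsr_{0,-1}(M)\cap rsr_{0,-1}(M)$. *)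

From HB Require Import structures.
From mathcomp Require Import all_boot all_order all_algebra.
From mathcomp Require Import complex.
From mathcomp Require Import Rstruct.
Set Implicit Arguments. Unset Strict Implicit. Unset Printing Implicit Defensive.
Import Order.TTheory GRing.Theory Num.Theory.
Local Open Scope ring_scope.

Definition CC : fieldType := (Rdefinitions.R)[i].

Definition binz (p : int) (i : nat) : CC :=
  (\prod_(j < i) (p%:~R - j%:R)) / (i`!)%:R.

Section VA.
Variable V : lmodType CC.
(* Y u n v  is  u_n v, where Y(u,z) = sum_n u_n z^{-n-1}. *)
Variable Y : V -> int -> V -> V.
Variable one : V.

Definition borch_lhs (u v w : V) (p q r : int) (M : nat) : V :=
  \sum_(i < M) binz p i *: Y (Y u (r + i%:Z) v) (p + q - i%:Z) w.
Definition borch_rhs (u v w : V) (p q r : int) (M : nat) : V :=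
  \sum_(i < M) ((-1) ^+ i * binz r i) *:
     (Y u (p + r - i%:Z) (Y v (q + i%:Z) w)
      - ((-1 : CC) ^ r) *: Y v (q + r - i%:Z) (Y u (p + i%:Z) w)).

Record is_vertex_algebra : Prop := {
  va_linear_l : forall n (a : CC) u u' v,
      Y (a *: u + u') n v = a *: Y u n v + Y u' n v;
  va_linear_r : forall u n (a : CC) v v',
      Y u n (a *: v + v') = a *: Y u n v + Y u n v';
  va_truncation : forall u v, exists N : int, forall n, N <= n -> Y u n v = 0;
  va_vacuum : forall n v, Y one n v = (if n == (-1)%R then v else 0);
  va_creation : forall u, Y u (-1) one = u /\ (forall n : int, 0 <= n -> Y u n one = 0);
  (* Borcherds identity (component form of the Jacobi identity); all sums are
     finite by truncation, so they are stated as eventually-stable partial sums. *)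
  va_borcherds : forall u v w (p q r : int), exists N : nat, forall M : nat,
      (N <= M)%N -> borch_lhs u v w p q r M = borch_rhs u v w p q r M
}.

Definition Dop (v : V) : V := Y v (-2) one.

Definition is_subspace (M : V -> Prop) : Prop :=
  M 0 /\ forall (a : CC) x y, M x -> M y -> M (a *: x + y).

Definition iterY (v : V) (ns : seq int) : V := foldr (fun n x => Y v n x) v ns.

Definition in01 (n : int) : bool := (n == 0) || (n == (-1)%R).

Definition lsr01 (M : V -> Prop) (v : V) : Prop :=
  forall b : V, exists m : nat, forall (s : int) (ns : seq int),
    (m <= size ns)%N -> in01 s -> all in01 ns -> M (Y b s (iterY v ns)).

Definition rsr01 (M : V -> Prop) (v : V) : Prop :=
  forall w : V, exists m : nat, forall (n : int) (ns : seq int),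
    (m <= size ns)%N -> in01 n -> all in01 ns -> M (Y (iterY v ns) n w).

Definition sr01 (M : V -> Prop) (v : V) : Prop := lsr01 M v /\ rsr01 M v.
End VA.

From HB Require Import structures.
From mathcomp Require Import all_boot all_order all_algebra.
From mathcomp Require Import zify complex Rstruct.
(* Skew-symmetry holds modulo D(V): the Borcherds identity for (a, b, 1)
   expresses a_r b + (-1)^r b_r a as a combination of vacuum descendants
   x_{-k-2} 1, and each of these is D(x_{-k-1} 1) / (k + 1).  Hence for a
   subspace M containing D(V), a_n b lies in M iff b_n a does, and this turns
   the condition defining lsr_{0,-1}(M) term by term into the one defining
   rsr_{0,-1}(M). *)

Set Implicit Arguments.
Unset Strict Implicit.
Unset Printing Implicit Defensive.

Import Order.TTheory GRing.Theory Num.Theory.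
Local Open Scope ring_scope.

Section VertexAlgebra.
Variables (V : lmodType CC) (Y : V -> int -> V -> V) (one : V).
Hypothesis HVA : is_vertex_algebra Y one.

Lemma Yr0 u n : Y u n 0 = 0.
Proof.
have := va_linear_r HVA u n (-1) 0 0.
by rewrite scaler0 addr0 scaleN1r addNr.
Qed.

Lemma Y_creation u : Y u (-1) one = u.
Proof. exact: (va_creation HVA u).1. Qed.

Lemma Y_vacuum_ge0 u (n : int) : 0 <= n -> Y u n one = 0.
Proof. exact: (va_creation HVA u).2. Qed.

Lemma Y_vacuum_nat u (n : nat) : Y u n%:Z one = 0.
Proof. exact: Y_vacuum_ge0. Qed.

Lemma binz0 p : binz p 0 = 1.
Proof. by rewrite /binz big_ord0 divr1. Qed.

Lemma binz1 p : binz p 1 = p%:~R.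
Proof. by rewrite /binz big_ord1 subr0 divr1. Qed.

Lemma binz0S i : binz 0 i.+1 = 0.
Proof. by rewrite /binz big_ord_recl /= subr0 !mul0r. Qed.

Lemma Dop_vacuum_descendant x (k : nat) :
  Dop Y one (Y x (- k.+1%:Z) one) = k.+1%:R *: Y x (- k.+2%:Z) one.
Proof.
have [N /(_ N.+2 (leqW (leqnSn N)))] := va_borcherds HVA x one one 0 (-2) (- k.+1%:Z).
rewrite /borch_lhs /borch_rhs !big_ord_recl !big1 => [|i _|i _]; rewrite ?lift0 /bump /=.
- rewrite binz0S !binz0 binz1 scale0r !addr0 mul1r scale1r.
  rewrite !Y_vacuum_nat !Yr0 !scaler0 !subr0 !(va_vacuum HVA).
  rewrite (_ : 0 - 2 == -1 :> int = false) // (_ : -2 + 1%:Z == -1 :> int) //.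
  rewrite Yr0 scaler0 add0r expr1 mulN1r add0r mulrNz opprK /Dop => ->.
  by congr (_ *: Y x _ one); lia.
- rewrite (va_vacuum HVA) Y_vacuum_nat Yr0 scaler0 subr0.
  by rewrite (_ : -2 + i.+2%:Z == -1 :> int = false) ?Yr0 ?scaler0 //; lia.
- by rewrite binz0S scale0r.
Qed.

Lemma skew_symmetry_vacuum a b (r : int) : exists N : nat,
  Y a r b + (-1) ^ r *: Y b r a =
  - \sum_(i < N) binz (-1) i.+1 *: Y (Y a (r + i.+1%:Z) b) (- i.+2%:Z) one.
Proof.
have [N borcherdsN] := va_borcherds HVA a b one (-1) 0 r.
exists N; move: (borcherdsN N.+1 (leqnSn N)).
have -> : borch_rhs Y a b one (-1) 0 r N.+1 = - ((-1) ^ r *: Y b r a).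
  rewrite /borch_rhs big_ord_recl big1 => [|i _]; rewrite ?lift0 /bump /=.
    rewrite [Y b _ one]Y_vacuum_ge0 // addr0 Yr0 sub0r binz0 mulr1 expr0 scale1r.
    by rewrite subr0 add0r addr0 Y_creation.
  by rewrite add0r Y_vacuum_nat Yr0 sub0r [Y a _ one]Y_vacuum_ge0 // Yr0 !scaler0 oppr0 scaler0.
set S := \sum_(i < N) _.
have -> : borch_lhs Y a b one (-1) 0 r N.+1 = Y a r b + S.
  rewrite /borch_lhs big_ord_recl /= binz0 scale1r !addr0 Y_creation.
  by congr (_ + _); apply: eq_bigr.
by move=> E; rewrite -[S](addKr (Y a r b)) E opprD !opprK.
Qed.

Variable M : V -> Prop.
Hypothesis HM : is_subspace M.
Hypothesis HD : forall v : V, M (Dop Y one v).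

Lemma subspace0 : M 0. Proof. exact: HM.1. Qed.

Lemma subspaceZ a x : M x -> M (a *: x).
Proof. by move=> Mx; have := HM.2 a x 0 Mx subspace0; rewrite addr0. Qed.

Lemma subspaceD x y : M x -> M y -> M (x + y).
Proof. by move=> Mx My; have := HM.2 1 x y Mx My; rewrite scale1r. Qed.

Lemma subspace_sum n (F : 'I_n -> V) : (forall i, M (F i)) -> M (\sum_(i < n) F i).
Proof. by move=> MF; apply: (big_ind M subspace0 subspaceD) => i _; apply: MF. Qed.

Lemma mem_vacuum_descendant x (k : nat) : M (Y x (- k.+2%:Z) one).
Proof.
have k1_neq0 : (k.+1%:R : (Rdefinitions.R)[i]) != 0 by rewrite pnatr_eq0.
have := subspaceZ k.+1%:R^-1 (HD (Y x (- k.+1%:Z) one)).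
by rewrite Dop_vacuum_descendant // scalerA mulVf // scale1r.
Qed.

Lemma mem_skew a b (r : int) : M (Y a r b + (-1) ^ r *: Y b r a).
Proof.
have [N ->] := skew_symmetry_vacuum a b r.
rewrite -scaleN1r; apply/subspaceZ/subspace_sum => i.
exact/subspaceZ/mem_vacuum_descendant.
Qed.

Lemma mem_Y_sym a b (n : int) : M (Y a n b) -> M (Y b n a).
Proof.
move=> Mab; have := subspaceD (mem_skew b a n) (subspaceZ (- (-1) ^ n) Mab).
by rewrite scaleNr addrK.
Qed.

Lemma lsr01_iff_rsr01 u : lsr01 Y M u <-> rsr01 Y M u.
Proof.
by split=> Hu w; have [m Hm] := Hu w; exists m => n ns size_ns n01 ns01;
  apply: mem_Y_sym; apply: Hm.
Qed.

End VertexAlgebra.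

Theorem mainTheorem3 (V : lmodType CC) (Y : V -> int -> V -> V) (one : V)
  (HVA : is_vertex_algebra Y one) (M : V -> Prop)
  (HM : is_subspace M) (HD : forall v : V, M (Dop Y one v)) :
  (forall u : V, lsr01 Y M u <-> rsr01 Y M u) /\
  (forall u : V, (lsr01 Y M u <-> sr01 Y M u) /\ (rsr01 Y M u <-> sr01 Y M u)).
Proof.
have lsr_rsr := lsr01_iff_rsr01 HVA HM HD.
split=> // u; rewrite /sr01 (lsr_rsr u).
by split; split=> [|[]] //.
Qed.
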